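(* Let $C_1,C_2$ be Archimedean $d$-copulas with strict generators $\phi_1,\phi_2$, respectively. If the function $f=\phi_1\circ\phi_2^{-1}:[0,\infty)\to[0,\infty)$ is subadditive near $\infty$, then $C_1\le_{loc}C_2$.
   Context: A generator is a continuous, strictly decreasing function $\phi:[0,1]\to[0,\infty]$ with $\phi(1)=0$; it is strict if $\lim_{s\searrow0}\phi(s)=\infty$, in which case $\phi$ is a bijection $(0,1]\to[0,\infty)$ with inverse $\phi^{-1}$. A $d$-copula $C$ is Archimedean with strict generator $\phi$ if $C(\boldsymbol u)=\phi^{-1}(\sum_{k=1}^d\phi(u_k))$ (with $C(\boldsymbol u)=0$ if some $u_k=0$). A function $f:[0,\infty)\to[0,\infty)$ is subadditive near $\infty$ if there is $M\ge0$ with $f(x+y)\le f(x)+f(y)$ for all $x,y\in[M,\infty)$. $C_1\le_{loc}C_2$ means there is $\varepsilon>0$ with $C_1(\boldsymbol u)\le C_2(\boldsymbol u)$ for all $\boldsymbol u\in B_\varepsilon(\boldsymbol 0)\cap[0,1]^d$ (Euclidean ball). *)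

From HB Require Import structures.
From mathcomp Require Import all_boot all_order all_algebra.
From mathcomp Require Import all_classical all_reals all_analysis.
Set Implicit Arguments. Unset Strict Implicit. Unset Printing Implicit Defensive.
Import Order.TTheory GRing.Theory Num.Theory.
Import numFieldNormedType.Exports.
Local Open Scope classical_set_scope.
Local Open Scope ring_scope.

Section Defs.
Variable R : realType.

Definition in_unit_cube (d : nat) (u : 'I_d -> R) : Prop :=
  forall k, 0 <= u k <= 1.

(* A d-copula: a function on [0,1]^d (values outside are irrelevant) which
   is grounded, has uniform one-dimensional margins, and is d-increasing
   (every d-box [a,b] has nonnegative C-volume). *)
Definition copula (d : nat) (C : ('I_d -> R) -> R) : Prop :=
  [/\ (forall u, in_unit_cube u -> (exists k, u k = 0) -> C u = 0),
      (forall u k, in_unit_cube u -> (forall j, j != k -> u j = 1) -> C u = u k) &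
      (forall a b, in_unit_cube a -> in_unit_cube b -> (forall k, a k <= b k) ->
        0 <= \sum_(e : {ffun 'I_d -> bool})
               (-1) ^+ #|[set k | ~~ e k]| * C (fun k => if e k then b k else a k))].

(* A strict generator phi : [0,1] -> [0,oo].  Since phi is strict, its
   (infinite) value at 0 is determined by continuity; we represent phi by an
   R-valued function and only use its values on (0,1]. *)
Definition strict_generator (phi : R -> R) : Prop :=
  [/\ {within [set x : R | 0 < x <= 1], continuous phi},
      (forall x y, 0 < x -> x < y -> y <= 1 -> phi y < phi x),
      phi 1 = 0 &
      phi x @[x --> 0^'+] --> +oo].

Definition gen_inv (phi : R -> R) (t : R) : R :=
  xget 1 [set v : R | 0 < v <= 1 /\ phi v = t].

Definition archimedean (d : nat) (C : ('I_d -> R) -> R) (phi : R -> R) : Prop :=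
  forall u, in_unit_cube u ->
    C u = if `[< exists k, u k = 0 >] then 0
          else gen_inv phi (\sum_(k < d) phi (u k)).

Definition subadditive_near_infty (f : R -> R) : Prop :=
  exists M : R, 0 <= M /\
    forall x y, M <= x -> M <= y -> f (x + y) <= f x + f y.

Definition copula_le_loc (d : nat) (C1 C2 : ('I_d -> R) -> R) : Prop :=
  exists eps : R, 0 < eps /\
    forall u, in_unit_cube u -> Num.sqrt (\sum_(k < d) u k ^+ 2) < eps ->
      C1 u <= C2 u.

End Defs.

From HB Require Import structures.
From mathcomp Require Import all_boot all_order all_algebra.
From mathcomp Require Import all_classical all_reals all_analysis.
Import Order.TTheory GRing.Theory Num.Theory.
Import numFieldNormedType.Exports.
Set Implicit Arguments.
Unset Strict Implicit.
Local Open Scope classical_set_scope.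
Local Open Scope ring_scope.

(* Near the origin every coordinate is small, so every phi2 (u k) is large
   because phi2 blows up at 0.  Writing f = phi1 o phi2^{-1}, subadditivity of
   f on [M, oo) then gives
     phi1 (C2 u) = f (sum_k phi2 (u k)) <= sum_k f (phi2 (u k)) = phi1 (C1 u),
   and since phi1 is decreasing, C1 u <= C2 u. *)

Section StrictGenerator.
Variables (R : realType) (phi : R -> R).

(* Also for t < 0, where [gen_inv] returns its default value 1. *)
Lemma gen_inv_in01 (t : R) : 0 < gen_inv phi t <= 1.
Proof.
by rewrite /gen_inv; case: xgetP => [v _ [] //|_]; rewrite ltr01 lexx.
Qed.

Hypothesis gphi : strict_generator phi.

Lemma strict_generator_ge (A : R) :
  exists2 e : R, 0 < e & forall x, 0 < x -> x < e -> A <= phi x.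
Proof.
case: gphi => _ _ _ /cvgryPge/(_ A)/nbhs_ballP[e e0 phiA].
exists e => // x x0 xe; apply: phiA => //.
by rewrite /ball /= sub0r normrN gtr0_norm.
Qed.

Lemma strict_generator_ge0 (v : R) : 0 < v <= 1 -> 0 <= phi v.
Proof.
case: gphi => _ phi_decr phi1 _ /andP[v0].
rewrite le_eqVlt => /orP[/eqP -> | v1]; first by rewrite phi1.
by rewrite -phi1 ltW // phi_decr.
Qed.

Lemma strict_generator_le (x y : R) : 0 < x <= 1 -> 0 < y <= 1 ->
  phi y <= phi x -> x <= y.
Proof.
case: gphi => _ phi_decr _ _ /andP[x0 x1] /andP[y0 y1].
by apply: contraTT; rewrite -!ltNge => /(phi_decr _ _ y0)->.
Qed.

Lemma strict_generator_onto (t : R) : 0 <= t ->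
  exists v, 0 < v <= 1 /\ phi v = t.
Proof.
move=> t0; have [e e0 phi_ge_t] := strict_generator_ge t.
case: gphi => phi_cont _ phi1 _.
pose a := Num.min (e / 2) 1.
have a0 : 0 < a by rewrite lt_min ltr01 andbT divr_gt0.
have a1 : a <= 1 by rewrite ge_min lexx orbT.
have ae : a < e by rewrite gt_min ltr_pdivrMr // ltr_pMr // ltr1n.
have [c ac phic] : exists2 c, c \in `[a, 1] & phi c = t.
  apply: IVT => //.
    apply: continuous_subspaceW phi_cont => x /=.
    by rewrite in_itv /= => /andP[ax ->]; rewrite andbT (lt_le_trans a0 ax).
  by rewrite phi1 ge_min t0 orbT le_max phi_ge_t.
move: ac; rewrite in_itv /= => /andP[ac c1].
by exists c; rewrite (lt_le_trans a0 ac) c1.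
Qed.

Lemma gen_invP (t : R) : 0 <= t -> phi (gen_inv phi t) = t.
Proof.
move=> /strict_generator_onto ex.
by have [_ ->] := xgetPex 1 (P := [set v | 0 < v <= 1 /\ phi v = t]) ex.
Qed.

Lemma gen_invK (v : R) : 0 < v <= 1 -> gen_inv phi (phi v) = v.
Proof.
move=> v01; have w01 := gen_inv_in01 (phi v).
have phiw : phi (gen_inv phi (phi v)) = phi v.
  by rewrite gen_invP // strict_generator_ge0.
by apply/eqP; rewrite eq_le; apply/andP; split;
  apply: strict_generator_le; rewrite ?phiw.
Qed.

End StrictGenerator.

Lemma subadditive_sum (R : realType) (f : R -> R) (M : R) : 0 <= M ->
  (forall x y, M <= x -> M <= y -> f (x + y) <= f x + f y) ->
  forall n (g : 'I_n -> R), (0 < n)%N -> (forall i, M <= g i) ->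
  f (\sum_i g i) <= \sum_i f (g i).
Proof.
move=> M0 f_subadd [//|n] + _; elim: n => [|n IH] g gM.
  by rewrite !big_ord1.
have sum_ge_M k (h : 'I_k.+1 -> R) : (forall i, M <= h i) -> M <= \sum_i h i.
  move=> hM; rewrite big_ord_recl -[M]addr0 lerD //.
  by apply: sumr_ge0 => i _; apply: le_trans (hM _).
rewrite !(big_ord_recr n.+1) /=.
apply: le_trans (f_subadd _ _ (sum_ge_M _ _ (fun i => gM _)) (gM _)) _.
by rewrite lerD2r IH.
Qed.

Lemma normr_le_sqrt_sumsq (R : realType) n (u : 'I_n -> R) k :
  `|u k| <= Num.sqrt (\sum_i u i ^+ 2).
Proof.
rewrite -sqrtr_sqr ler_sqrt; last by rewrite sumr_ge0 // => i _; rewrite sqr_ge0.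
by rewrite (bigD1 k) //= lerDl sumr_ge0 // => i _; rewrite sqr_ge0.
Qed.

Lemma gen_inv_sum_le (R : realType) (phi1 phi2 : R -> R) (M : R) d
    (u : 'I_d -> R) :
  strict_generator phi1 -> strict_generator phi2 -> 0 <= M ->
  (forall x y, M <= x -> M <= y -> phi1 (gen_inv phi2 (x + y)) <=
     phi1 (gen_inv phi2 x) + phi1 (gen_inv phi2 y)) ->
  (0 < d)%N -> (forall k, 0 < u k <= 1) -> (forall k, M <= phi2 (u k)) ->
  gen_inv phi1 (\sum_k phi1 (u k)) <= gen_inv phi2 (\sum_k phi2 (u k)).
Proof.
move=> g1 g2 M0 f_subadd d0 u01 uM.
have S1_ge0 : 0 <= \sum_k phi1 (u k).
  by apply: sumr_ge0 => k _; apply: strict_generator_ge0.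
apply: (strict_generator_le g1); rewrite ?gen_inv_in01 // gen_invP //.
apply: le_trans
  (subadditive_sum (f := fun x => phi1 (gen_inv phi2 x)) M0 f_subadd d0 uM) _.
by apply: ler_sum => k _; rewrite gen_invK.
Qed.

Theorem mainTheorem12 (R : realType) (d : nat)
    (C1 C2 : ('I_d -> R) -> R) (phi1 phi2 : R -> R) :
  (2 <= d)%N ->
  copula C1 -> copula C2 ->
  strict_generator phi1 -> strict_generator phi2 ->
  archimedean C1 phi1 -> archimedean C2 phi2 ->
  subadditive_near_infty (fun x => phi1 (gen_inv phi2 x)) ->
  copula_le_loc C1 C2.
Proof.
move=> d2 _ _ g1 g2 arch1 arch2 [M [M0 f_subadd]].
have [e e0 phi2_ge_M] := strict_generator_ge g2 M.
exists e; split => // u u01 u_small.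
rewrite arch1 // arch2 //; case: ifP => // /negbT/asboolPn u_nz.
have u_pos k : 0 < u k.
  rewrite lt_neqAle eq_sym (andP (u01 k)).1 andbT.
  by apply/eqP => uk0; apply: u_nz; exists k.
have u_lt_e k : u k < e.
  by rewrite -[u k]gtr0_norm // (le_lt_trans (normr_le_sqrt_sumsq _ _)).
apply: (gen_inv_sum_le g1 g2 M0 f_subadd) => [|k|k].
- exact: leq_trans d2.
- by rewrite u_pos (andP (u01 k)).2.
- exact: phi2_ge_M.
Qed.
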